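(* Suppose Assumption A holds. If the quadratic eigenvalue multiplicity $k$ satisfies $k\ge m+2$, then $\operatorname{conv}(\mathcal D)=\mathcal D_{\mathrm{SDP}}$.
   Context: Fix integers $N\ge 1$, $m_I,m_E\ge 0$, $m:=m_I+m_E\ge 1$; $[a,b]=\{a,\dots,b\}$, $[n]=[1,n]$. For $i\in[0,m]$ let $q_i(x)=x^\top A_ix+2b_i^\top x+c_i$ with $A_i\in\mathbb S^N$, $b_i\in\mathbb R^N$, $c_i\in\mathbb R$. $\mathcal D:=\{(x,t)\in\mathbb R^N\times\mathbb R: q_0(x)\le 2t,\ q_i(x)\le0\ \forall i\in[m_I],\ q_i(x)=0\ \forall i\in[m_I+1,m]\}$. Let $Q_i=\begin{pmatrix}c_i& b_i^\top\\ b_i& A_i\end{pmatrix}$; $\mathcal D_{\mathrm{SDP}}:=\{(x,t):\exists X\in\mathbb S^N$ with $Y=\begin{pmatrix}1&x^\top\\ x& X\end{pmatrix}\succeq0$, $\langle Q_0,Y\rangle\le 2t$, $\langle Q_i,Y\rangle\le 0\ \forall i\in[m_I]$, $\langle Q_i,Y\rangle= 0\ \forall i\in[m_I+1,m]\}$. $A(\gamma)=A_0+\sum_{i=1}^m\gamma_iA_i$. Assumption A: the QCQP feasible set $\{x: q_i(x)\le0\ \forall i\in[m_I],\ q_i(x)=0\ \forall i\in[m_I+1,m]\}$ is nonempty and some $\gamma^*\in\mathbb R^m$ with $\gamma^*_i\ge0$ ($i\in[m_I]$) has $A(\gamma^* )\succ0$. The quadratic eigenvalue multiplicity is the largest integer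 $k$ (with $N=nk$) such that for every $i\in[0,m]$ there is $\mathcal A_i\in\mathbb S^n$ with $A_i=I_k\otimes\mathcal A_i$. *)

From HB Require Import structures.
From mathcomp Require Import all_boot all_order all_algebra.
Set Implicit Arguments. Unset Strict Implicit. Unset Printing Implicit Defensive.
Import Order.TTheory GRing.Theory Num.Theory.
Local Open Scope ring_scope.

Section Defs.
Variable R : rcfType.

Definition symmx n (M : 'M[R]_n) : Prop := M^T = M.

Definition psd n (M : 'M[R]_n) : Prop :=
  symmx M /\ forall v : 'cV[R]_n, 0 <= (v^T *m M *m v) 0 0.

Definition pd n (M : 'M[R]_n) : Prop :=
  symmx M /\ forall v : 'cV[R]_n, v != 0 -> 0 < (v^T *m M *m v) 0 0.

Definition frob n (P Q : 'M[R]_n) : R := \tr (P^T *m Q).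

Definition kron m1 n1 m2 n2 (A : 'M[R]_(m1, n1)) (B : 'M[R]_(m2, n2))
  : 'M[R]_(m1 * m2, n1 * n2) :=
  \matrix_(i, j) \sum_(a < m1) \sum_(b < m2) \sum_(c < n1) \sum_(d < n2)
     (if ((i == a * m2 + b :> nat) && (j == c * n2 + d :> nat))%N
      then A a c * B b d else 0).

Definition quad N (A : 'M[R]_N) (b : 'cV[R]_N) (c : R) (x : 'cV[R]_N) : R :=
  (x^T *m A *m x) 0 0 + 2 * (b^T *m x) 0 0 + c.

Definition Qmat N (A : 'M[R]_N) (b : 'cV[R]_N) (c : R) : 'M[R]_(1 + N) :=
  block_mx c%:M b^T b A.

Definition Ymat N (x : 'cV[R]_N) (X : 'M[R]_N) : 'M[R]_(1 + N) :=
  block_mx 1%:M x^T x X.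

(* Constraint data: index 0 is the objective, indices 1..mI are inequality
   constraints and mI+1..mI+mE are equality constraints; m = mI + mE. *)

Definition feas N (m mI : nat) (A : 'I_m.+1 -> 'M[R]_N) (b : 'I_m.+1 -> 'cV[R]_N)
  (c : 'I_m.+1 -> R) (x : 'cV[R]_N) : Prop :=
  (forall i : 'I_m.+1, (0 < i <= mI)%N -> quad (A i) (b i) (c i) x <= 0) /\
  (forall i : 'I_m.+1, (mI < i)%N -> quad (A i) (b i) (c i) x = 0).

Definition D_QCQP N (m mI : nat) (A : 'I_m.+1 -> 'M[R]_N) (b : 'I_m.+1 -> 'cV[R]_N)
  (c : 'I_m.+1 -> R) (x : 'cV[R]_N) (t : R) : Prop :=
  quad (A 0) (b 0) (c 0) x <= 2 * t /\ feas mI A b c x.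

Definition D_SDP N (m mI : nat) (A : 'I_m.+1 -> 'M[R]_N) (b : 'I_m.+1 -> 'cV[R]_N)
  (c : 'I_m.+1 -> R) (x : 'cV[R]_N) (t : R) : Prop :=
  exists X : 'M[R]_N, symmx X /\ psd (Ymat x X) /\
    frob (Qmat (A 0) (b 0) (c 0)) (Ymat x X) <= 2 * t /\
    (forall i : 'I_m.+1, (0 < i <= mI)%N -> frob (Qmat (A i) (b i) (c i)) (Ymat x X) <= 0) /\
    (forall i : 'I_m.+1, (mI < i)%N -> frob (Qmat (A i) (b i) (c i)) (Ymat x X) = 0).

Definition convhull N (S : 'cV[R]_N -> R -> Prop) (x : 'cV[R]_N) (t : R) : Prop :=
  exists (p : nat) (l : 'I_p -> R) (xs : 'I_p -> 'cV[R]_N) (ts : 'I_p -> R),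
    (forall j, 0 <= l j) /\ \sum_(j < p) l j = 1 /\ (forall j, S (xs j) (ts j)) /\
    x = \sum_(j < p) l j *: xs j /\ t = \sum_(j < p) l j * ts j.

(* A(gamma) = A_0 + sum_{i=1}^m gamma_i A_i  (gamma indexed from 0) *)
Definition Agamma N (m : nat) (A : 'I_m.+1 -> 'M[R]_N) (g : 'I_m -> R) : 'M[R]_N :=
  A 0 + \sum_(i < m) g i *: A (lift ord0 i).

Definition assumptionA N (m mI : nat) (A : 'I_m.+1 -> 'M[R]_N) (b : 'I_m.+1 -> 'cV[R]_N)
  (c : 'I_m.+1 -> R) : Prop :=
  (exists x, feas mI A b c x) /\
  exists g : 'I_m -> R, (forall i : 'I_m, (i < mI)%N -> 0 <= g i) /\ pd (Agamma A g).

Definition has_mult N (m : nat) (A : 'I_m.+1 -> 'M[R]_N) (k : nat) : Prop :=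
  exists (n : nat) (e : (k * n)%N = N) (cA : 'I_m.+1 -> 'M[R]_n),
    forall i, symmx (cA i) /\ A i = castmx (e, e) (kron (1%:M : 'M[R]_k) (cA i)).

Definition qe_mult N (m : nat) (A : 'I_m.+1 -> 'M[R]_N) (k : nat) : Prop :=
  has_mult A k /\ forall k', has_mult A k' -> (k' <= k)%N.

End Defs.

(* The inclusion of conv(D) in D_SDP holds for any QCQP: a convex combination of the lifts
   Y(x_j, x_j x_j^T) of feasible points satisfies the relaxed (linear) constraints.
   Conversely let (x, X) be feasible for the SDP and write X - x x^T = sum_y y y^T.  Since
   A_i = I_k (x) calA_i, each term contributes sum_a v_a^T calA_i v_a over the blocks v_a of y,
   so <Q_i, Y> = q_i(x) + sum_v v^T calA_i v for a finite list of vectors v in R^n.  For a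
   single v, the m + 1 linear conditions "e (x) v is orthogonal to A_i x + b_i" on e in R^k
   have a unit solution e as k > m + 1, and z = e (x) v gives q_i(x +- z) = q_i(x) +
   v^T calA_i v for all i.
   Induction on the list shows that x is a convex combination of points y with
   q_i(y) = <Q_i, Y> for every i, all of which lie in D. *)
From HB Require Import structures.
From mathcomp Require Import all_boot all_order all_algebra ring lra.
Set Implicit Arguments. Unset Strict Implicit. Unset Printing Implicit Defensive.
Import Order.TTheory GRing.Theory Num.Theory.
Local Open Scope ring_scope.

Section BlockIndex.
Variables k n : nat.

Lemma ltn_idx (a : 'I_k) (b : 'I_n) : (a * n + b < k * n)%N.
Proof. by rewrite -ltn_divLR ?divnMDl ?divn_small ?addn0 // (leq_trans _ (ltn_ord b)). Qed.

Definition idx (a : 'I_k) (b : 'I_n) : 'I_(k * n) := Ordinal (ltn_idx a b).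

Lemma idx_dim_gt0 (i : 'I_(k * n)) : (0 < n)%N.
Proof. by case: n i => [|//]; rewrite muln0 => -[]. Qed.

Lemma ltn_idx_blk (i : 'I_(k * n)) : (i %/ n < k)%N.
Proof. by rewrite ltn_divLR ?(idx_dim_gt0 i). Qed.

Lemma ltn_idx_pos (i : 'I_(k * n)) : (i %% n < n)%N.
Proof. by rewrite ltn_pmod ?(idx_dim_gt0 i). Qed.

Definition idx_blk (i : 'I_(k * n)) : 'I_k := Ordinal (ltn_idx_blk i).
Definition idx_pos (i : 'I_(k * n)) : 'I_n := Ordinal (ltn_idx_pos i).

Lemma idxK i : idx (idx_blk i) (idx_pos i) = i.
Proof. by apply: val_inj; rewrite /= -divn_eq. Qed.

Lemma idx_blkK a b : idx_blk (idx a b) = a.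
Proof.
by apply: val_inj; rewrite /= divnMDl ?divn_small ?addn0 // (leq_trans _ (ltn_ord b)).
Qed.

Lemma idx_posK a b : idx_pos (idx a b) = b.
Proof. by apply: val_inj; rewrite /= modnMDl modn_small. Qed.

Lemma big_idx (R : nmodType) (F : 'I_(k * n) -> R) :
  \sum_i F i = \sum_a \sum_b F (idx a b).
Proof.
rewrite pair_bigA /= (reindex (fun p : 'I_k * 'I_n => idx p.1 p.2)) //.
by exists (fun i => (idx_blk i, idx_pos i)) => [[a b]|i] _; rewrite ?idx_blkK ?idx_posK ?idxK.
Qed.

Lemma sum_idx_delta (R : nmodType) (F : 'I_k -> 'I_n -> R) a b :
  \sum_a' \sum_b' (if idx a b == idx a' b' then F a' b' else 0) = F a b.
Proof.
transitivity (\sum_j (if idx a b == j then F (idx_blk j) (idx_pos j) else 0)).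
  by rewrite big_idx; do 2!apply: eq_bigr => ? _; rewrite idx_blkK idx_posK.
by rewrite -big_mkcond (big_pred1 (idx a b)) ?idx_blkK ?idx_posK // => j; rewrite eq_sym.
Qed.

End BlockIndex.

Lemma kron_idx (R : rcfType) m1 n1 m2 n2 (A : 'M[R]_(m1, n1)) (B : 'M[R]_(m2, n2))
    a b c d :
  kron A B (idx a b) (idx c d) = A a c * B b d.
Proof.
rewrite /kron mxE -[RHS](sum_idx_delta (fun a' b' => A a' c * B b' d)).
apply: eq_bigr => a' _; apply: eq_bigr => b' _.
rewrite -[(_ == a' * m2 + b')%N]/(idx a b == idx a' b').
case: (idx a b == idx a' b') => /=; last by rewrite !big1.
exact: (sum_idx_delta (fun c' d' => A a' c' * B b' d')).
Qed.

Section Quadratic.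
Variable R : rcfType.

Lemma trmx11 (M : 'M[R]_1) : M^T 0 0 = M 0 0.
Proof. by rewrite mxE. Qed.

Lemma dot_sym N (u w : 'cV[R]_N) : (u^T *m w) 0 0 = (w^T *m u) 0 0.
Proof. by rewrite -trmx11 trmx_mul trmxK. Qed.

Lemma bilin_sym N (A : 'M[R]_N) (u w : 'cV[R]_N) : symmx A ->
  (u^T *m A *m w) 0 0 = (w^T *m A *m u) 0 0.
Proof. by move=> sA; rewrite -trmx11 !trmx_mul trmxK sA mulmxA. Qed.

Lemma quadD N (A : 'M[R]_N) b c (x z : 'cV[R]_N) : symmx A ->
  quad A b c (x + z) =
  quad A b c x + 2 * (z^T *m (A *m x + b)) 0 0 + (z^T *m A *m z) 0 0.
Proof.
move=> sA; rewrite /quad [(x + z)^T]linearD /= !mulmxDl !mulmxDr ![((_ + _ : 'M_1) 0 0)]mxE.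
rewrite mulmxA (bilin_sym x z sA) (dot_sym b z); ring.
Qed.

Lemma quadD_orth N (A : 'M[R]_N) b c (x z : 'cV[R]_N) : symmx A ->
  (z^T *m (A *m x + b)) 0 0 = 0 ->
  quad A b c (x + z) = quad A b c x + (z^T *m A *m z) 0 0.
Proof. by move=> sA z_orth; rewrite quadD // z_orth mulr0 addr0. Qed.

Lemma unit_left_kernel_vector k m (C : 'M[R]_(k, m)) : (m < k)%N ->
  exists e : 'rV[R]_k, e *m C = 0 /\ (e *m e^T) 0 0 = 1.
Proof.
move=> ltmk; have /rowV0Pn[v /sub_kermxP vC v0] : kermx C != 0.
  by rewrite kermx_eq0 /row_free neq_ltn (leq_ltn_trans (rank_leq_col C)).
have normE : (v *m v^T) 0 0 = \sum_a v 0 a ^+ 2.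
  by rewrite mxE; apply: eq_bigr => a _; rewrite mxE expr2.
have norm_gt0 : 0 < (v *m v^T) 0 0.
  rewrite normE lt_def sumr_ge0 ?andbT => [|a _]; last exact: sqr_ge0.
  apply: contraNneq v0 => /psumr_eq0P v2_eq0; apply/eqP/rowP => a.
  by apply/eqP; rewrite mxE -sqrf_eq0 v2_eq0 // => b _; rewrite sqr_ge0.
exists ((Num.sqrt ((v *m v^T) 0 0))^-1 *: v); split.
  by rewrite -scalemxAl vC scaler0.
rewrite linearZ /= -scalemxAl -scalemxAr ![(_ *: _ : 'M_1) 0 0]mxE mulrA -expr2 exprVn.
by rewrite sqr_sqrtr ?mulVf ?gt_eqF // ltW.
Qed.
End Quadratic.

Section TensorBlocks.
Variables (R : rcfType) (k n : nat).

Definition vblock (y : 'cV[R]_(k * n)) (a : 'I_k) : 'cV[R]_n := \col_b y (idx a b) 0.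

Definition tensv (e : 'rV[R]_k) (v : 'cV[R]_n) : 'cV[R]_(k * n) :=
  \col_i (e 0 (idx_blk i) * v (idx_pos i) 0).

Lemma bilin_kron1 (B : 'M[R]_n) (u w : 'cV[R]_(k * n)) :
  (u^T *m kron (1%:M : 'M[R]_k) B *m w) 0 0 =
  \sum_a ((vblock u a)^T *m B *m vblock w a) 0 0.
Proof.
rewrite mxE big_idx; apply: eq_bigr => a _; rewrite mxE; apply: eq_bigr => d _.
rewrite !mxE big_idx (bigD1 a) //= [X in _ + X]big1 ?addr0 => [|a' a'a].
  by congr (_ * _); apply: eq_bigr => b _; rewrite kron_idx !mxE eqxx mul1r.
by apply: big1 => b _; rewrite kron_idx !mxE (negPf a'a) mulr0n mul0r mulr0.
Qed.

Lemma vblock_tensv e v a : vblock (tensv e v) a = e 0 a *: v.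
Proof. by apply/colP => b; rewrite !mxE idx_blkK idx_posK. Qed.

Lemma dot_tensv e v (g : 'cV[R]_(k * n)) :
  ((tensv e v)^T *m g) 0 0 = \sum_a e 0 a * (v^T *m vblock g a) 0 0.
Proof.
rewrite mxE big_idx; apply: eq_bigr => a _; rewrite mxE mulr_sumr.
by apply: eq_bigr => b _; rewrite !mxE idx_blkK idx_posK mulrA.
Qed.

Lemma qf_kron1_tensv e v (B : 'M[R]_n) :
  ((tensv e v)^T *m kron (1%:M : 'M[R]_k) B *m tensv e v) 0 0 =
  (e *m e^T) 0 0 * (v^T *m B *m v) 0 0.
Proof.
rewrite bilin_kron1 mxE mulr_suml; apply: eq_bigr => a _.
rewrite vblock_tensv linearZ /= [(_ *: v)^T]linearZ /= -!scalemxAl !mxE.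
by rewrite mulrA.
Qed.

Lemma tensv_lift_orthogonal m (g : 'I_m -> 'cV[R]_(k * n)) (v : 'cV[R]_n) : (m < k)%N ->
  exists z : 'cV[R]_(k * n), (forall i, (z^T *m g i) 0 0 = 0) /\
    forall B : 'M[R]_n, (z^T *m kron (1%:M : 'M[R]_k) B *m z) 0 0 = (v^T *m B *m v) 0 0.
Proof.
move=> ltmk; pose C := \matrix_(a < k, i < m) (v^T *m vblock (g i) a) 0 0.
have [e [eC e1]] := unit_left_kernel_vector C ltmk.
exists (tensv e v); split => [i | B]; last by rewrite qf_kron1_tensv e1 mul1r.
rewrite dot_tensv; transitivity ((e *m C) 0 i); last by rewrite eC mxE.
by rewrite mxE; apply: eq_bigr => a _; rewrite [C _ _]mxE.
Qed.

End TensorBlocks.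

Section LevelHull.
Variables (R : rcfType) (N m : nat).
Variables (A : 'I_m -> 'M[R]_N) (b : 'I_m -> 'cV[R]_N) (c : 'I_m -> R).

Definition in_level_hull (lvl : 'I_m -> R) (x : 'cV[R]_N) : Prop :=
  exists s : seq (R * 'cV[R]_N),
    [/\ forall p, p \in s -> 0 <= p.1, \sum_(p <- s) p.1 = 1,
        \sum_(p <- s) p.1 *: p.2 = x &
        forall p, p \in s -> forall i, quad (A i) (b i) (c i) p.2 = lvl i].

Lemma eq_in_level_hull lvl lvl' x :
  lvl =1 lvl' -> in_level_hull lvl x -> in_level_hull lvl' x.
Proof. by move=> E [s [s_ge0 s1 sx sq]]; exists s; split=> // p ps i; rewrite -E sq. Qed.

Lemma in_level_hull_self x : in_level_hull (fun i => quad (A i) (b i) (c i) x) x.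
Proof.
exists [:: (1, x)]; split; rewrite ?big_seq1 ?scale1r // => p; rewrite inE => /eqP -> //=.
Qed.

Lemma in_level_hull_midpoint lvl x z :
  in_level_hull lvl (x + z) -> in_level_hull lvl (x - z) -> in_level_hull lvl x.
Proof.
move=> [s1 [s1_ge0 s11 s1x s1q]] [s2 [s2_ge0 s21 s2x s2q]].
have two_neq0 : 2 != 0 :> R by rewrite pnatr_eq0.
pose half (p : R * 'cV[R]_N) := (p.1 / 2, p.2).
exists (map half s1 ++ map half s2); split.
- move=> p; rewrite mem_cat => /orP[] /mapP[q qs ->].
    exact: divr_ge0 (s1_ge0 q qs) (ler0n _ 2).
  exact: divr_ge0 (s2_ge0 q qs) (ler0n _ 2).
- by rewrite big_cat !big_map /= -!mulr_suml s11 s21 -mulrDl -(natrD R 1 1) divff.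
- rewrite big_cat !big_map /=.
  under eq_bigr => p _ do rewrite mulrC -scalerA.
  under [X in _ + X]eq_bigr => p _ do rewrite mulrC -scalerA.
  rewrite -!scaler_sumr s1x s2x -scalerDr addrACA subrr addr0 -mulr2n -scaler_nat.
  by rewrite scalerA mulVf ?scale1r.
- by move=> p; rewrite mem_cat => /orP[] /mapP[q qs ->]; [exact: s1q q qs | exact: s2q q qs].
Qed.

End LevelHull.

Lemma in_level_hull_kron1 (R : rcfType) k n m (A : 'I_m -> 'M[R]_(k * n))
    (cA : 'I_m -> 'M[R]_n) (b : 'I_m -> 'cV[R]_(k * n)) (c : 'I_m -> R) :
  (m < k)%N -> (forall i, symmx (A i)) -> (forall i, A i = kron 1%:M (cA i)) ->
  forall (vs : seq 'cV[R]_n) x, in_level_hull A b c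
    (fun i => quad (A i) (b i) (c i) x + \sum_(v <- vs) (v^T *m cA i *m v) 0 0) x.
Proof.
move=> ltmk sA hA; elim=> [|v vs IH] x.
  by apply: eq_in_level_hull (in_level_hull_self A b c x) => i; rewrite big_nil addr0.
have [z [z_orth zA]] := tensv_lift_orthogonal (fun i => A i *m x + b i) v ltmk.
have quad_shift (y : 'cV[R]_(k * n)) i : y = z \/ y = - z ->
    quad (A i) (b i) (c i) (x + y) = quad (A i) (b i) (c i) x + (v^T *m cA i *m v) 0 0.
  move=> yz; have y_orth : (y^T *m (A i *m x + b i)) 0 0 = 0.
    by case: yz => ->; rewrite ?linearN /= ?mulNmx ?[(- _ : 'M_1) 0 0]mxE z_orth ?oppr0.
  rewrite quadD_orth // -(zA (cA i)) -hA.
  by case: yz => ->; rewrite // [(- z)^T]linearN /= mulNmx mulmxN mulNmx opprK.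
apply: (in_level_hull_midpoint (z := z)).
  by apply: eq_in_level_hull (IH (x + z)) => i; rewrite quad_shift ?big_cons ?addrA //; left.
by apply: eq_in_level_hull (IH (x - z)) => i; rewrite quad_shift ?big_cons ?addrA //; right.
Qed.

Section Psd.
Variable R : rcfType.

Lemma qf_delta N (M : 'M[R]_N) i j :
  ((delta_mx i 0 : 'cV[R]_N)^T *m M *m (delta_mx j 0 : 'cV[R]_N)) 0 0 = M i j.
Proof. by rewrite trmx_delta -rowE -colE !mxE. Qed.

Lemma qf_addZ N (M : 'M[R]_N) (u w : 'cV[R]_N) t : symmx M ->
  ((u + t *: w)^T *m M *m (u + t *: w)) 0 0 =
  (u^T *m M *m u) 0 0 + 2 * t * (w^T *m M *m u) 0 0 + t ^+ 2 * (w^T *m M *m w) 0 0.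
Proof.
move=> sM; have := quadD 0 0 u (t *: w) sM; rewrite /quad linear0 !mul0mx addr0.
rewrite [(0 : 'M_1) 0 0]mxE !mulr0 !addr0 => ->.
by rewrite mulmxA linearZ /= -!scalemxAl -scalemxAr !mxE; ring.
Qed.

Lemma symmx_entry N (M : 'M[R]_N) i j : symmx M -> M j i = M i j.
Proof. by move=> sM; rewrite -[in LHS]sM mxE. Qed.

Lemma psd_diag_ge0 N (M : 'M[R]_N) i : psd M -> 0 <= M i i.
Proof. by move=> [_ pM]; rewrite -qf_delta. Qed.

Lemma psd_eq0 N (M : 'M[R]_N) : psd M -> (forall i, M i i = 0) -> M = 0.
Proof.
move=> [sM pM] d0; apply/matrixP => i j; rewrite mxE.
have := pM (delta_mx i 0 + (- M i j) *: delta_mx j 0).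
rewrite qf_addZ // !qf_delta !d0 (symmx_entry _ _ sM) => qf_ge0.
by apply/eqP; rewrite -sqrf_eq0 eq_le sqr_ge0 andbT; lra.
Qed.

Lemma psd_sub_outer_col N (M : 'M[R]_N) j : psd M -> 0 < M j j ->
  psd (M - (M j j)^-1 *: (col j M *m (col j M)^T)).
Proof.
move=> [sM pM] Mjj_gt0; split.
  by rewrite /symmx linearB linearZ /= trmx_mul trmxK sM.
move=> v; pose ej : 'cV[R]_N := delta_mx j 0.
have outerE : (v^T *m (col j M *m (col j M)^T) *m v) 0 0 = (ej^T *m M *m v) 0 0 ^+ 2.
  rewrite colE trmx_mul sM !mulmxA -(mulmxA _ ej^T) -/ej -mulmxA mxE big_ord1.
  by rewrite (bilin_sym v ej sM) -mulmxA expr2.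
have := pM (v + (- ((ej^T *m M *m v) 0 0 / M j j)) *: ej).
rewrite qf_addZ // qf_delta mulmxBr mulmxBl -scalemxAr -scalemxAl.
rewrite [(_ - _ : 'M_1) 0 0]mxE [(- _ : 'M_1) 0 0]mxE [(_ *: _ : 'M_1) 0 0]mxE outerE.
suff -> : forall q be : R,
    q + 2 * - (be / M j j) * be + (- (be / M j j)) ^+ 2 * M j j = q - (M j j)^-1 * be ^+ 2 by [].
by move=> q be; field; rewrite gt_eqF.
Qed.

Lemma psd_sum_outer N (M : 'M[R]_N) :
  psd M -> exists ys : seq 'cV[R]_N, M = \sum_(y <- ys) y *m y^T.
Proof.
have [p] := ubnP #|[pred i | M i i != 0]|; elim: p M => // p IH M.
rewrite ltnS => Mp psdM.
have [/forallP M0 | /forallPn[j Mjj]] := boolP [forall i, M i i == 0].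
  by exists [::]; rewrite big_nil; apply: psd_eq0 => // i; apply/eqP.
have Mjj_gt0 : 0 < M j j by rewrite lt_def Mjj psd_diag_ge0.
have psdM' := psd_sub_outer_col psdM Mjj_gt0.
set M' := M - _ in psdM'.
have M'E i : M' i i = M i i - M i j ^+ 2 / M j j.
  by rewrite !mxE big_ord1 !mxE mulrC expr2.
have supp : [pred i | M' i i != 0] \proper [pred i | M i i != 0].
  apply/properP; split.
    apply/subsetP => i; rewrite !inE; apply: contraNN => /eqP Mii0.
    rewrite eq_le psd_diag_ge0 // andbT M'E Mii0 sub0r oppr_le0.
    by rewrite divr_ge0 ?sqr_ge0 ?ltW.
  by exists j; rewrite !inE // M'E expr2 mulrK ?subrr ?eqxx // unitfE gt_eqF.
have [ys M'_ys] := IH M' (leq_trans (proper_card supp) Mp) psdM'.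
exists ((Num.sqrt (M j j))^-1 *: col j M :: ys); rewrite big_cons -M'_ys /M'.
rewrite linearZ /= -scalemxAl -scalemxAr scalerA -expr2 exprVn sqr_sqrtr ?ltW //.
by rewrite addrC subrK.
Qed.
End Psd.

Section Relaxation.
Variable R : rcfType.

Lemma mxtrace11 (M : 'M[R]_1) : \tr M = M 0 0.
Proof. by rewrite /mxtrace big_ord1. Qed.

Lemma mxtrace_mul_outer N (A : 'M[R]_N) (x : 'cV[R]_N) :
  \tr (A *m (x *m x^T)) = (x^T *m A *m x) 0 0.
Proof. by rewrite mulmxA mxtrace_mulC mxtrace11 mulmxA. Qed.

Lemma frob_Qmat_Ymat N (A : 'M[R]_N) b c x X : symmx A ->
  frob (Qmat A b c) (Ymat x X) = c + 2 * (b^T *m x) 0 0 + \tr (A *m X).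
Proof.
move=> sA; rewrite /frob /Qmat /Ymat tr_block_mx trmxK tr_scalar_mx sA.
rewrite mulmx_block mxtrace_block !mxtraceD mulmx1 !mxtrace11 mxtrace_mulC mxtrace11.
by rewrite (dot_sym x b) mxE eqxx mulr1n; ring.
Qed.

Lemma frob_Qmat_Ymat_outer N (A : 'M[R]_N) b c x : symmx A ->
  frob (Qmat A b c) (Ymat x (x *m x^T)) = quad A b c x.
Proof. by move=> sA; rewrite frob_Qmat_Ymat // mxtrace_mul_outer /quad; ring. Qed.

Lemma Ymat_outer N (y : 'cV[R]_N) :
  Ymat y (y *m y^T) = col_mx 1%:M y *m (col_mx 1%:M y)^T.
Proof. by rewrite tr_col_mx mul_col_row tr_scalar_mx !mul1mx mulmx1. Qed.

Lemma psd_outer M (g : 'cV[R]_M) : psd (g *m g^T).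
Proof.
split=> [|v]; first by rewrite /symmx trmx_mul trmxK.
by rewrite mulmxA -(mulmxA (v^T *m g)) mxE big_ord1 (dot_sym g v) -expr2 sqr_ge0.
Qed.

Lemma psd_conic M p (l : 'I_p -> R) (Ms : 'I_p -> 'M[R]_M) :
  (forall j, 0 <= l j) -> (forall j, psd (Ms j)) -> psd (\sum_j l j *: Ms j).
Proof.
move=> l_ge0 psdMs; split=> [|v].
  by rewrite /symmx linear_sum; apply: eq_bigr => j _; rewrite linearZ /= (proj1 (psdMs j)).
rewrite mulmx_sumr mulmx_suml summxE sumr_ge0 // => j _.
by rewrite -scalemxAr -scalemxAl mxE mulr_ge0 // (proj2 (psdMs j)).
Qed.

Lemma frob_sumr M p (Q : 'M[R]_M) (l : 'I_p -> R) (Ys : 'I_p -> 'M[R]_M) :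
  frob Q (\sum_j l j *: Ys j) = \sum_j l j * frob Q (Ys j).
Proof.
rewrite /frob mulmx_sumr raddf_sum /=; apply: eq_bigr => j _.
by rewrite -scalemxAr mxtraceZ.
Qed.

Lemma sum_block_mx p m1 m2 n1 n2 (ul : 'I_p -> 'M[R]_(m1, n1))
    (ur : 'I_p -> 'M[R]_(m1, n2)) (dl : 'I_p -> 'M[R]_(m2, n1))
    (dr : 'I_p -> 'M[R]_(m2, n2)) :
  \sum_j block_mx (ul j) (ur j) (dl j) (dr j) =
  block_mx (\sum_j ul j) (\sum_j ur j) (\sum_j dl j) (\sum_j dr j).
Proof.
elim: p ul ur dl dr => [|p IH] ul ur dl dr; first by rewrite !big_ord0 block_mx0.
by rewrite !big_ord_recr /= IH add_block_mx.
Qed.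

Lemma Ymat_convex N p (l : 'I_p -> R) (xs : 'I_p -> 'cV[R]_N) (Xs : 'I_p -> 'M[R]_N) :
  \sum_j l j = 1 ->
  \sum_j l j *: Ymat (xs j) (Xs j) = Ymat (\sum_j l j *: xs j) (\sum_j l j *: Xs j).
Proof.
move=> l1; rewrite /Ymat.
under eq_bigr => j _ do rewrite scale_block_mx.
rewrite sum_block_mx -scaler_suml l1 scale1r linear_sum /=.
by congr block_mx; apply: eq_bigr => j _; rewrite linearZ.
Qed.

Lemma psd_Ymat_schur N (x : 'cV[R]_N) X :
  symmx X -> psd (Ymat x X) -> psd (X - x *m x^T).
Proof.
move=> sX [_ psdY]; split=> [|w]; first by rewrite /symmx linearB /= trmx_mul trmxK sX.
have := psdY (col_mx (- (x^T *m w)) w).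
rewrite /Ymat tr_col_mx mul_row_block mul_row_col mulmx1 [(- _)^T]linearN /=.
rewrite trmx_mul trmxK addNr mul0mx add0r.
by rewrite mulmxDl mulNmx mulmxBr mulmxBl !mulmxA mulNmx addrC.
Qed.

Lemma convhull_D_QCQP_sub_D_SDP N m mI (A : 'I_m.+1 -> 'M[R]_N) b c :
  (forall i, symmx (A i)) ->
  forall x t, convhull (D_QCQP mI A b c) x t -> D_SDP mI A b c x t.
Proof.
move=> sA x t [p [l [xs [ts [l_ge0 [l1 [Dxs [-> ->]]]]]]]].
exists (\sum_j l j *: (xs j *m (xs j)^T)); rewrite -(Ymat_convex xs _ l1).
have frobE i : frob (Qmat (A i) (b i) (c i)) (\sum_j l j *: Ymat (xs j) (xs j *m (xs j)^T)) =
    \sum_j l j * quad (A i) (b i) (c i) (xs j).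
  by rewrite frob_sumr; apply: eq_bigr => j _; rewrite frob_Qmat_Ymat_outer.
split; [|split; [|split; [|split]]].
- rewrite /symmx linear_sum; apply: eq_bigr => j _.
  by rewrite linearZ /= (proj1 (psd_outer (xs j))).
- by apply: psd_conic => // j; rewrite Ymat_outer; apply: psd_outer.
- rewrite frobE mulr_sumr; apply: ler_sum => j _.
  by rewrite mulrCA ler_wpM2l // (proj1 (Dxs j)).
- move=> i iI; rewrite frobE -oppr_ge0 -sumrN sumr_ge0 // => j _.
  by rewrite -mulrN mulr_ge0 // oppr_ge0 (proj1 (proj2 (Dxs j))).
- by move=> i iE; rewrite frobE big1 // => j _; rewrite (proj2 (proj2 (Dxs j))) // mulr0.
Qed.

Lemma frob_Qmat_Ymat_blocks k n m (A : 'I_m -> 'M[R]_(k * n)) (cA : 'I_m -> 'M[R]_n)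
    b c x X :
  (forall i, symmx (A i)) -> (forall i, A i = kron 1%:M (cA i)) ->
  symmx X -> psd (Ymat x X) ->
  exists vs : seq 'cV[R]_n, forall i, frob (Qmat (A i) (b i) (c i)) (Ymat x X) =
    quad (A i) (b i) (c i) x + \sum_(v <- vs) (v^T *m cA i *m v) 0 0.
Proof.
move=> sA hA sX psdY; have [ys X_ys] := psd_sum_outer (psd_Ymat_schur sX psdY).
exists [seq vblock y a | y <- ys, a <- enum 'I_k] => i.
have -> : X = x *m x^T + (X - x *m x^T) by rewrite addrC subrK.
rewrite frob_Qmat_Ymat // mulmxDr mxtraceD mxtrace_mul_outer X_ys mulmx_sumr raddf_sum /=.
rewrite big_allpairs_dep /quad addrA; congr (_ + _); first ring.
by apply: eq_bigr => y _; rewrite mxtrace_mul_outer hA bilin_kron1 big_enum.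
Qed.

Lemma convhull_of_level_hull N m (A : 'I_m -> 'M[R]_N) b c lvl
    (D : 'cV[R]_N -> R -> Prop) x t :
  in_level_hull A b c lvl x ->
  (forall y, (forall i, quad (A i) (b i) (c i) y = lvl i) -> D y t) -> convhull D x t.
Proof.
move=> [s [s_ge0 s1 sx sq]] lvlD.
pose l (j : 'I_(size s)) := (nth (0, 0) s j).1.
have l1 : \sum_j l j = 1 by rewrite -s1 (big_nth (0, 0)) big_mkord.
exists (size s), l, (fun j => (nth (0, 0) s j).2), (fun _ => t).
do ![split]; last by rewrite -mulr_suml l1 mul1r.
- by move=> j; apply: s_ge0; apply: mem_nth.
- exact: l1.
- by move=> j; apply: lvlD; apply: sq; apply: mem_nth.
- by rewrite -sx (big_nth (0, 0)) big_mkord.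
Qed.

Lemma D_SDP_sub_convhull_D_QCQP N m mI (A : 'I_m.+1 -> 'M[R]_N) b c k :
  (forall i, symmx (A i)) -> has_mult A k -> (m.+1 < k)%N ->
  forall x t, D_SDP mI A b c x t -> convhull (D_QCQP mI A b c) x t.
Proof.
move=> sA [n [kn [cA cA_kron]]] ltmk x t [X [sX [psdY [Q0 [QI QE]]]]].
subst N; have hA i : A i = kron 1%:M (cA i) by rewrite (proj2 (cA_kron i)) castmx_id.
have [vs frobE] := frob_Qmat_Ymat_blocks b c sA hA sX psdY.
apply: convhull_of_level_hull (in_level_hull_kron1 b c ltmk sA hA vs x) _ => y y_lvl.
by split; [|split] => [|i i_m|i i_m]; rewrite y_lvl -frobE; auto.
Qed.

End Relaxation.

Unset Implicit Arguments.

Theorem mainTheorem19 (R : rcfType) (N mI mE : nat)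
  (A : 'I_(mI + mE).+1 -> 'M[R]_N) (b : 'I_(mI + mE).+1 -> 'cV[R]_N)
  (c : 'I_(mI + mE).+1 -> R) (k : nat) :
  (1 <= N)%N -> (1 <= mI + mE)%N ->
  (forall i, symmx (A i)) ->
  assumptionA mI A b c ->
  qe_mult A k ->
  (mI + mE + 2 <= k)%N ->
  forall (x : 'cV[R]_N) (t : R),
    convhull (D_QCQP mI A b c) x t <-> D_SDP mI A b c x t.
Proof.
move=> _ _ sA _ [hk _] lemk x t; split; first exact: convhull_D_QCQP_sub_D_SDP.
by apply: D_SDP_sub_convhull_D_QCQP hk _ x t; rewrite addn2 in lemk.
Qed.
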